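(* Let $X$ be a random vector in $\mathbb{R}^n$, let $m\ge1$ be an integer and let $x\in\mathcal{C}_m(X)$. Then, for any norm $\|\cdot\|$ on $\mathbb{R}^n$, $$\mathbb{E}\left[\frac{1}{\|X-x\|^m}\right]=+\infty.$$
   Context: For a random vector $X$ in $\mathbb{R}^n$ and an integer $m\ge0$, the $m$-dimensional mould $\mathcal{C}_m(X)$ is the set of all $x\in\mathbb{R}^n$ such that $\liminf_{\epsilon\to0^+}\mathbb{P}(\|X-x\|_2<\epsilon)/\epsilon^m>0$ (this set does not change if $\|\cdot\|_2$ is replaced by any other norm on $\mathbb{R}^n$). *)

From HB Require Import structures.
From mathcomp Require Import all_boot all_order all_algebra.
From mathcomp Require Import all_classical all_reals all_analysis.
Set Implicit Arguments. Unset Strict Implicit. Unset Printing Implicit Defensive.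
Import Order.TTheory GRing.Theory Num.Theory.
Import numFieldTopology.Exports numFieldNormedType.Exports.
Local Open Scope classical_set_scope.
Local Open Scope ring_scope.

Definition norm2 (R : realType) (n : nat) (v : 'rV[R]_n) : R :=
  Num.sqrt (\sum_(i < n) v ord0 i ^+ 2).

Definition is_norm (R : realType) (n : nat) (N : 'rV[R]_n -> R) : Prop :=
  [/\ (forall v, N v = 0 -> v = 0),
      (forall (a : R) v, N (a *: v) = `|a| * N v) &
      (forall u v, N (u + v) <= N u + N v)].

Definition random_vector d (T : measurableType d) (R : realType) (n : nat)
  (X : T -> 'rV[R]_n) : Prop :=
  forall i : 'I_n, measurable_fun setT (fun t => X t ord0 i).

Definition mould d (T : measurableType d) (R : realType)
  (P : probability T R) (n : nat) (X : T -> 'rV[R]_n) (m : nat) : set 'rV[R]_n :=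
  [set x | (0 < limf_einf
              (fun eps : R => (P [set t | (norm2 (X t - x) < eps)%R]
                                / (eps ^+ m)%:E)%E) (0%R)^'+)%E].

(* Write r_k = e 2^(-k-1) and u_k = r_k^(-m).  If P(|X - x|_2 < r) >= c r^m
   for small r, the simple functions
     sum_(k < K) (u_(k+1) - u_k) 1{|X - x|_2 < r_(k+1)}
   stay below |X - x|_2^(-m), because the sum telescopes, and each layer has
   integral at least (u_(k+1) - u_k) c r_(k+1)^m = c (1 - 2^(-m)); so the
   integral of |X - x|_2^(-m) exceeds K c (1 - 2^(-m)) for every K.  Since every
   norm on R^n is at most a constant multiple of the Euclidean one, the same
   holds for N(X - x)^(-m). *)

From HB Require Import structures.
From mathcomp Require Import all_boot all_order all_algebra.
From mathcomp Require Import all_classical all_reals all_analysis.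
From mathcomp Require Import lra ring measurable_realfun.
Set Implicit Arguments.
Unset Strict Implicit.
Import Order.TTheory GRing.Theory Num.Theory.
Import HBNNSimple.
Local Open Scope classical_set_scope.
Local Open Scope ring_scope.

Lemma coord_le_norm2 (R : realType) n (v : 'rV[R]_n) j : `|v ord0 j| <= norm2 v.
Proof.
rewrite /norm2 -sqrtr_sqr ler_sqrt ?sumr_ge0 // => [|i _]; last exact: sqr_ge0.
by rewrite (bigD1 j) //= lerDl sumr_ge0 // => i _; exact: sqr_ge0.
Qed.

Section is_norm.
Context (R : realType) (n : nat) (N : 'rV[R]_n -> R).
Hypothesis normN : is_norm N.

Lemma is_norm0 : N 0 = 0.
Proof. by case: normN => _ NZ _; rewrite -(scale0r 0) NZ normr0 mul0r. Qed.

Lemma is_norm_ge0 v : 0 <= N v.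
Proof.
case: normN => _ NZ ND; have := ND v (- v).
by rewrite subrr is_norm0 -scaleN1r NZ normrN normr1 mul1r; lra.
Qed.

Lemma is_norm_sum (I : Type) (s : seq I) (f : I -> 'rV[R]_n) :
  N (\sum_(i <- s) f i) <= \sum_(i <- s) N (f i).
Proof.
case: normN => _ _ ND; elim: s => [|i s IH]; first by rewrite !big_nil is_norm0.
by rewrite !big_cons (le_trans (ND _ _)) // lerD2l.
Qed.

Lemma is_norm_le_norm2 : exists2 C, 0 < C & forall v, N v <= C * norm2 v.
Proof.
case: (normN) => _ NZ _.
exists (1 + \sum_(j < n) N (delta_mx 0 j)) => [|v].
  by rewrite ltr_pwDl // sumr_ge0 // => j _; exact: is_norm_ge0.
rewrite {1}(matrix_sum_delta v) big_ord1 (le_trans (is_norm_sum _ _)) //.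
apply: (@le_trans _ _ (\sum_(j < n) norm2 v * N (delta_mx 0 j))).
  by apply: ler_sum => j _; rewrite NZ ler_wpM2r ?is_norm_ge0 ?coord_le_norm2.
by rewrite -mulr_sumr mulrC ler_wpM2r ?sqrtr_ge0 // lerDr.
Qed.

End is_norm.

Section random_vector.
Context d (T : measurableType d) (R : realType) (n : nat).
Variables (X : T -> 'rV[R]_n) (x : 'rV[R]_n).

Lemma measurable_norm2_lt r : random_vector X -> 0 < r ->
  measurable [set t | norm2 (X t - x) < r].
Proof.
move=> mX r_gt0.
have sqrt_lt a : (Num.sqrt a < r) = (a < r ^+ 2).
  by rewrite -{1}(gtr0_norm r_gt0) -sqrtr_sqr ltr_sqrt ?exprn_gt0.
have -> : [set t | norm2 (X t - x) < r] =
    setT `&` (fun t => \sum_(i < n) (X t - x) ord0 i ^+ 2) @^-1` `]-oo, r ^+ 2[.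
  by apply/seteqP; split => t /=; rewrite /norm2 in_itv /= sqrt_lt //; case.
have m_sum : measurable_fun setT (fun t => \sum_(i < n) (X t - x) ord0 i ^+ 2).
  apply: measurable_sum => i; under eq_fun do rewrite !mxE.
  by apply: measurable_funX; apply: measurable_funB.
by apply: m_sum => //; exact: measurable_itv.
Qed.

Lemma mould_small_ball_mass (P : probability T R) m : x \in mould P X m ->
  exists e c : R, [/\ 0 < e, 0 < c & forall r, 0 < r -> r < e ->
    ((c * r ^+ m)%:E <= P [set t | (norm2 (X t - x) < r)%R])%E].
Proof.
rewrite inE /mould /= limf_einfE => /ereal_sup_gt [_ [V V_nbhs <-] V_inf].
have [c [c_gt0 c_le]] : exists c : R, 0 < c /\ (c%:E <= ereal_inf
    [set (P [set t | (norm2 (X t - x) < r)%R] / (r ^+ m)%:E)%E | r in V])%E.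
  move: V_inf; case: ereal_inf => [c| |] //= c_gt0.
  - by exists c; rewrite -lte_fin.
  - by exists 1; rewrite leey.
move: V_nbhs => /nbhs_ballP [e e_gt0 eV]; exists e, c; split => // r r_gt0 r_lt.
have Vr : V r by apply: eV => //; rewrite /ball /= sub0r normrN gtr0_norm.
have := le_trans c_le (ereal_inf_lbound (ex_intro2 _ _ r Vr erefl)).
by rewrite /= EFinM -lee_pdivlMr ?exprn_gt0 // inver gt_eqF ?exprn_gt0.
Qed.

End random_vector.

Lemma sum_telescope_mask_le (R : realDomainType) (u : nat -> R) (p : nat -> bool) y K :
  (forall k, u k <= u k.+1) -> (forall k, p k -> u k <= y) -> 0 <= u 0%N -> 0 <= y ->
  \sum_(k < K) (u k.+1 - u k) * (p k.+1)%:R <= y.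
Proof.
move=> u_nd u_le u0_ge0 y_ge0.
suff [S_le _] : let S := \sum_(k < K) (u k.+1 - u k) * (p k.+1)%:R in
    S <= Num.max 0 (y - u 0%N) /\ S <= u K - u 0%N.
  by apply: le_trans S_le _; rewrite ge_max y_ge0 gerBl.
elim: K => [|K [IH1 IH2]] /=; first by rewrite big_ord0 le_max lexx subrr.
rewrite big_ord_recr /=; have := u_nd K; case: (boolP (p K.+1)) => /= pK uK.
- have uKy := u_le _ pK.
  by rewrite mulr1 le_max; split; [apply/orP; right|]; lra.
- by rewrite mulr0 addr0; split => //; lra.
Qed.

Section sintegral.
Context d (T : measurableType d) (R : realType) (mu : {measure set T -> \bar R}).
Local Open Scope ereal_scope.

Lemma sintegral_sum_nnsfun (h : {nnsfun T >-> R}^nat) K :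
  sintegral mu (sum_nnsfun h K) = \sum_(k < K) sintegral mu (h k).
Proof.
elim: K => [|K IH]; first by rewrite big_ord0 /sum_nnsfun big_ord0 sintegral0.
rewrite big_ord_recr /= -IH -sintegralD; apply: eq_sintegral => t.
by rewrite /= !sum_nnsfunE big_ord_recr.
Qed.

Lemma sintegral_le_ge0_integral (h : {nnsfun T >-> R}) (F : T -> \bar R) :
  (forall t, 0 <= F t) -> (forall t, (h t)%:E <= F t) ->
  sintegral mu h <= \int[mu]_t F t.
Proof. by move=> F_ge0 hF; rewrite ge0_integralTE //; apply: ereal_sup_ubound; exists h. Qed.

End sintegral.

Lemma lee_inv_expr (R : realType) (a b : R) m : 0 <= a <= b ->
  (((b ^+ m)%:E)^-1 <= ((a ^+ m)%:E)^-1)%E.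
Proof.
move=> /andP[a_ge0 ab]; have b_ge0 := le_trans a_ge0 ab.
by rewrite lee_pV2 ?inE /= ?lee_fin ?exprn_ge0 // lerXn2r ?nnegrE.
Qed.

Section inverse_power_integral.
Context d (T : measurableType d) (R : realType) (mu : {measure set T -> \bar R}).
Variables (f : T -> R) (m : nat) (e c : R).
Hypotheses (m_gt0 : (0 < m)%N) (e_gt0 : 0 < e) (c_gt0 : 0 < c).
Hypothesis f_ge0 : forall t, 0 <= f t.
Hypothesis measurable_f_lt : forall r, 0 < r -> measurable [set t | f t < r].
Hypothesis mu_f_lt : forall r, 0 < r -> r < e ->
  ((c * r ^+ m)%:E <= mu [set t | (f t < r)%R])%E.

Let rad k := e / 2 ^+ k.+1.
Let u k := (rad k ^+ m)^-1.

Let rad_gt0 k : 0 < rad k.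
Proof. by rewrite divr_gt0 ?exprn_gt0. Qed.

Let rad_lt k : rad k < e.
Proof. by rewrite ltr_pdivrMr ?exprn_gt0 // ltr_pMr // exprn_egt1 ?ltr1n. Qed.

Let radS k : rad k.+1 = rad k / 2.
Proof. by rewrite /rad exprS invfM mulrA mulrAC. Qed.

Let u_le k : u k <= u k.+1.
Proof.
rewrite lef_pV2 ?posrE ?exprn_gt0 // lerXn2r ?nnegrE ?ltW // radS.
by have := rad_gt0 k; lra.
Qed.

Let u_ge0 k : 0 <= u k.
Proof. by rewrite invr_ge0 exprn_ge0 // ltW. Qed.

Let du_ge0 k : 0 <= u k.+1 - u k.
Proof. by rewrite subr_ge0 u_le. Qed.

Let layer k : {nnsfun T >-> R} :=
  scale_nnsfun (indic_nnsfun R (measurable_f_lt (rad_gt0 k.+1))) (du_ge0 k).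

Let layerE k t : layer k t = (u k.+1 - u k) * (f t < rad k.+1)%R%:R.
Proof.
rewrite /= mindicE; congr (_ * (nat_of_bool _)%:R).
by apply/idP/idP => [/set_mem|/mem_set].
Qed.

Let sintegral_layer k :
  ((c * (1 - 2^-1 ^+ m))%:E <= sintegral mu (layer k))%E.
Proof.
rewrite sintegralrM sintegral_indic.
apply: le_trans (lee_wpmul2l _ (mu_f_lt (rad_gt0 k.+1) (rad_lt k.+1))); last first.
  by rewrite lee_fin du_ge0.
rewrite /= -EFinM lee_fin [leRHS](_ : _ = c * (1 - 2^-1 ^+ m)) //.
have rk_neq0 : rad k ^+ m != 0 by rewrite expf_neq0 // gt_eqF.
have half_neq0 : 2^-1 ^+ m != 0 :> R by rewrite expf_neq0 // invr_neq0.
rewrite /u radS exprMn; field.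
by rewrite rk_neq0 half_neq0.
Qed.

Let sum_layers_le t K :
  ((sum_nnsfun layer K t)%:E <= ((f t ^+ m)%:E)^-1)%E.
Proof.
have [ft0|ft_neq0] := eqVneq (f t) 0.
  by rewrite ft0 expr0n gtn_eqF // inve0 leey.
have ft_gt0 : 0 < f t by rewrite lt0r ft_neq0 f_ge0.
rewrite inver expf_eq0 (negbTE ft_neq0) andbF lee_fin sum_nnsfunE.
under eq_bigr do rewrite layerE.
apply: (@sum_telescope_mask_le _ u (fun k => f t < rad k)) => [k|k /= ft_lt||].
- exact: u_le.
- by rewrite lef_pV2 ?posrE ?exprn_gt0 // lerXn2r ?nnegrE ?ltW.
- exact: u_ge0.
- by rewrite invr_ge0 exprn_ge0 // ltW.
Qed.

Lemma ge0_integral_inv_expr_pinfty (F : T -> \bar R) :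
  (forall t, (0 <= F t)%E) -> (forall t, (((f t ^+ m)%:E)^-1 <= F t)%E) ->
  (\int[mu]_t F t = +oo)%E.
Proof.
move=> F_ge0 F_ge; pose a := c * (1 - 2^-1 ^+ m).
have a_gt0 : 0 < a by rewrite mulr_gt0 // subr_gt0 exprn_ilt1 ?gtn_eqF //; lra.
apply/eqyP => r _; pose K := (Num.truncn (r / a)).+1.
have r_le : r <= K%:R * a by rewrite -ler_pdivrMr // ltW // truncnS_gt.
apply: le_trans (sintegral_le_ge0_integral mu F_ge0
  (fun t => le_trans (sum_layers_le t K) (F_ge t))).
rewrite sintegral_sum_nnsfun; apply: le_trans (_ : (\sum_(k < K) a%:E <= _)%E).
  by rewrite sumEFin sumr_const card_ord -mulr_natl lee_fin.
by apply: lee_sum => k _; exact: sintegral_layer.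
Qed.

End inverse_power_integral.

Theorem mainTheorem4 (d : measure_display) (T : measurableType d) (R : realType)
  (P : probability T R) (n : nat) (X : T -> 'rV[R]_n) (m : nat)
  (x : 'rV[R]_n) (N : 'rV[R]_n -> R) :
  random_vector X -> (1 <= m)%N -> x \in mould P X m -> is_norm N ->
  (\int[P]_t (((N (X t - x)) ^+ m)%:E)^-1 = +oo)%E.
Proof.
move=> mX m_gt0 x_mould normN.
have [C C_gt0 N_le] := is_norm_le_norm2 normN.
have [e [c [e_gt0 c_gt0 P_ball]]] := mould_small_ball_mass x_mould.
pose f t := C * norm2 (X t - x).
have f_ballE r : [set t | f t < r] = [set t | norm2 (X t - x) < r / C].
  by apply/seteqP; split => t /=; rewrite ltr_pdivlMr // mulrC.
apply: (@ge0_integral_inv_expr_pinfty _ _ _ _ f m (C * e) (c / C ^+ m)) => //.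
- by rewrite mulr_gt0.
- by rewrite divr_gt0 ?exprn_gt0.
- by move=> t; rewrite mulr_ge0 ?sqrtr_ge0 ?ltW.
- by move=> r r_gt0; rewrite f_ballE; apply: measurable_norm2_lt; rewrite ?divr_gt0.
- move=> r r_gt0 r_lt; rewrite f_ballE.
  have rC_lt : r / C < e by rewrite ltr_pdivrMr // mulrC.
  apply: le_trans (P_ball _ (divr_gt0 r_gt0 C_gt0) rC_lt).
  by rewrite exprMn exprVn mulrA mulrAC.
- by move=> t; rewrite inve_ge0 lee_fin exprn_ge0 ?is_norm_ge0.
- by move=> t; apply: lee_inv_expr; rewrite is_norm_ge0 ?N_le.
Qed.
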